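(* Let $v_1,\dots,v_m\in\mathbb{Q}^n$, let $P=P_{v_1,\dots,v_m}$, and let $a_1\le b_1,\dots,a_m\le b_m$ be elements of $\mathbb{Q}_P$. If $w\in\sum_{i=1}^m\mathbb{Q}_Pv_i$ can be written as $w=\sum_{i=1}^m x_iv_i$ with rational numbers $a_i\le x_i\le b_i$ ($i=1,\dots,m$), then there exist $y_1,\dots,y_m\in\mathbb{Q}_P$ with $a_i\le y_i\le b_i$ for all $i$ and $w=\sum_{i=1}^m y_iv_i$.
   Context: An elementary integral relation among $v_1,\dots,v_m$ is a relation $\sum_{i=1}^m a_iv_i=0$ with $a_i\in\mathbb{Z}$ not all zero, whose support $\{i:a_i\neq0\}$ is minimal (inclusion-wise) among supports of nontrivial linear relations, and whose coefficients have greatest common divisor $1$. $P_{v_1,\dots,v_m}$ is the (finite) set of primes $p$ for which there exists an elementary integral relation $\sum a_iv_i=0$ with $p\mid\prod_{a_i\neq0}a_i$. For a set of primes $P$, $\mathbb{Q}_P=\{a/b: a,b\in\mathbb{Z},\ b\neq0,\ \text{all prime factors of } b \text{ lie in } P\}$ (so $\mathbb{Q}_\emptyset=\mathbb{Z}$). *)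

From HB Require Import structures.
From mathcomp Require Import all_boot all_order all_algebra.
Set Implicit Arguments. Unset Strict Implicit. Unset Printing Implicit Defensive.
Import Order.TTheory GRing.Theory Num.Theory.
Local Open Scope ring_scope.

Definition supp {m : nat} {R : nzRingType} (c : 'I_m -> R) : {set 'I_m} :=
  [set i | c i != 0].

Definition lin_rel {m n : nat} (v : 'I_m -> 'rV[rat]_n) (c : 'I_m -> rat) : Prop :=
  (exists i, c i != 0) /\ \sum_(i < m) c i *: v i = 0.

Definition elem_int_rel {m n : nat} (v : 'I_m -> 'rV[rat]_n) (a : 'I_m -> int) : Prop :=
  [/\ lin_rel v (fun i => (a i)%:~R),
      (forall c : 'I_m -> rat, lin_rel v c -> supp c \subset supp a -> supp c = supp a)
    & \big[gcdz/0]_(i < m) a i = 1].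

Definition inP {m n : nat} (v : 'I_m -> 'rV[rat]_n) (p : nat) : Prop :=
  prime p /\ exists a : 'I_m -> int,
    elem_int_rel v a /\ (p %| \prod_(i < m | a i != 0) `|a i|)%N.

Definition inQP {m n : nat} (v : 'I_m -> 'rV[rat]_n) (q : rat) : Prop :=
  exists (a b : int), b != 0 /\ q = a%:~R / b%:~R /\
    (forall p : nat, prime p -> (p %| `|b|)%N -> inP v p).

From HB Require Import structures.
From mathcomp Require Import all_boot all_order all_algebra.
From mathcomp Require Import ring lra.
From mathcomp Require Import boolp.
Set Implicit Arguments. Unset Strict Implicit. Unset Printing Implicit Defensive.
Import Order.TTheory GRing.Theory Num.Theory.
Local Open Scope ring_scope.

(* Moving x along a linear relation among the v_i with slack coordinates (strictly
   between their bounds) until one of them reaches a bound, we obtain a representation y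
   of w in the box whose slack coordinates index linearly independent vectors; the other
   coordinates of y are some a_i or b_i, hence in Q_P.  Extend the slack set to a maximal
   independent set B.  For i outside B, the elementary integral relation a supported on
   {i} u B (unique up to scaling) gives v_i = - sum_(j in B) (a_j / a_i) v_j, with
   coefficients in Q_P.  So the coordinates along B of y and of the given
   Q_P-representation z of w agree, and each slack coordinate y_j is such a coordinate
   minus a Q_P-combination of non-slack coordinates. *)

Section QPClosure.
Variables (m n : nat) (v : 'I_m -> 'rV[rat]_n).

Lemma inQP_int (k : int) : inQP v k%:~R.
Proof.
exists k, 1; split=> //; split; first by rewrite divr1.
by move=> p p_pr; rewrite dvdn1 => /eqP p1; rewrite p1 in p_pr.
Qed.

Lemma inQP0 : inQP v 0. Proof. exact: (inQP_int 0). Qed.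

Lemma inQPD x y : inQP v x -> inQP v y -> inQP v (x + y).
Proof.
move=> [a1 [b1 [b1_neq0 [-> P1]]]] [a2 [b2 [b2_neq0 [-> P2]]]].
exists (a1 * b2 + a2 * b1), (b1 * b2); split; first by rewrite mulf_neq0.
split; last first.
  by move=> p p_pr; rewrite abszM Euclid_dvdM // => /orP[] ?; [exact: P1 | exact: P2].
have b1R : b1%:~R != 0 :> rat by rewrite intr_eq0.
have b2R : b2%:~R != 0 :> rat by rewrite intr_eq0.
by rewrite rmorphD !rmorphM /=; field; rewrite b1R b2R.
Qed.

Lemma inQPM x y : inQP v x -> inQP v y -> inQP v (x * y).
Proof.
move=> [a1 [b1 [b1_neq0 [-> P1]]]] [a2 [b2 [b2_neq0 [-> P2]]]].
exists (a1 * a2), (b1 * b2); split; first by rewrite mulf_neq0.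
split; last first.
  by move=> p p_pr; rewrite abszM Euclid_dvdM // => /orP[] ?; [exact: P1 | exact: P2].
by rewrite !rmorphM /= mulf_div.
Qed.

Lemma inQPN x : inQP v x -> inQP v (- x).
Proof. by rewrite -mulN1r; apply: inQPM; rewrite -(rmorphN1 intr); apply: inQP_int. Qed.

Lemma inQP_sum (I : Type) (r : seq I) (P : pred I) (F : I -> rat) :
  (forall i, P i -> inQP v (F i)) -> inQP v (\sum_(i <- r | P i) F i).
Proof. by move=> PF; apply: big_ind => //; [exact: inQP0 | exact: inQPD]. Qed.

Lemma inQP_div_elem_int_rel (a : 'I_m -> int) i (k : int) :
  elem_int_rel v a -> a i != 0 -> inQP v (k%:~R / (a i)%:~R).
Proof.
move=> a_elem ai_neq0; exists k, (a i); do 2!split=> //.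
move=> p p_pr p_dvd; split=> //; exists a; split=> //.
by apply: dvdn_trans p_dvd _; rewrite (bigD1 i) //= dvdn_mulr.
Qed.

End QPClosure.

Section PrimitiveIntegerVectors.
Variable I : finType.

Lemma dvdz_big_gcdz (F : I -> int) j : (\big[gcdz/0]_i F i %| F j)%Z.
Proof.
by rewrite /dvdz (big_morph absz (op1 := gcdn) (id1 := 0%N)) //; apply: biggcdn_inf.
Qed.

Lemma big_gcdz_divz (F : I -> int) (g := \big[gcdz/0]_i F i) :
  g != 0 -> \big[gcdz/0]_i (F i %/ g)%Z = 1.
Proof.
move=> g_neq0; apply: (mulIf g_neq0); rewrite mul1r.
have g_ge0 : 0 <= g by apply: (big_rec (fun x : int => 0 <= x)).
have mulg_gcd : {morph *%R^~ g : x y / gcdz x y}.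
  by move=> x y /=; rewrite -mulz_gcdl gez0_abs.
rewrite (big_morph _ mulg_gcd (mul0r g)); apply: eq_bigr => i _.
exact: divzK (dvdz_big_gcdz F i).
Qed.

Lemma clear_denominators (c : I -> rat) :
  exists a : I -> int, exists2 l : rat, l != 0 & forall j, (a j)%:~R = l * c j.
Proof.
exists (fun j => numq (c j) * \prod_(k | k != j) denq (c k)), (\prod_k denq (c k))%:~R.
  by rewrite intr_eq0 prodf_seq_neq0; apply/allP => k _; rewrite denq_neq0.
by move=> j; rewrite (bigD1 j (P := xpredT)) //= !intrM numqE -mulrA mulrC.
Qed.

Lemma primitive_int_multiple (c : I -> rat) k : c k != 0 ->
  exists a : I -> int, exists2 l : rat, l != 0 &
    (forall j, (a j)%:~R = l * c j) /\ \big[gcdz/0]_j a j = 1.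
Proof.
move=> ck_neq0; have [a0 [l l_neq0 a0E]] := clear_denominators c.
pose g := \big[gcdz/0]_j a0 j.
have g_neq0 : g != 0.
  apply: contra_neq ck_neq0 => g0.
  have /eqP a0k0 : a0 k == 0 by rewrite -dvd0z -g0 dvdz_big_gcdz.
  by apply: (mulfI l_neq0); rewrite mulr0 -a0E a0k0.
have gR_neq0 : g%:~R != 0 :> rat by rewrite intr_eq0.
exists (fun j => (a0 j %/ g)%Z), (l / g%:~R); first by rewrite mulf_neq0 ?invr_eq0.
split; last exact: big_gcdz_divz.
by move=> j; rewrite mulrAC -a0E -[in RHS](divzK (dvdz_big_gcdz a0 j)) intrM mulfK.
Qed.

End PrimitiveIntegerVectors.

Definition free_on m n (v : 'I_m -> 'rV[rat]_n) (S : {set 'I_m}) : Prop :=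
  forall c : 'I_m -> rat, (forall i, i \notin S -> c i = 0) ->
    \sum_i c i *: v i = 0 -> forall i, c i = 0.

Section Circuits.
Variables (m n : nat) (v : 'I_m -> 'rV[rat]_n).

Lemma rel_of_not_free_on S : ~ free_on v S ->
  exists c : 'I_m -> rat,
    [/\ forall i, i \notin S -> c i = 0, \sum_i c i *: v i = 0 & exists k, c k != 0].
Proof.
move=> notfree; apply: contrapT => no_rel; apply: notfree => c c_supp c_rel i.
by case: (eqVneq (c i) 0) => // ci_neq0; case: no_rel; exists c; split=> //; exists i.
Qed.

Variables (B : {set 'I_m}) (i : 'I_m).
Hypothesis freeB : free_on v B.

Lemma rel_on_setU1_eq0 (c : 'I_m -> rat) :
  (forall j, j \notin i |: B -> c j = 0) -> \sum_j c j *: v j = 0 ->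
  c i = 0 -> forall j, c j = 0.
Proof.
move=> c_supp c_rel ci0; apply: freeB c_rel => j jNB.
by case: (eqVneq j i) => [-> //|ji]; apply: c_supp; rewrite !inE negb_or ji.
Qed.

Lemma rel_on_setU1_proportional (c c' : 'I_m -> rat) :
  (forall j, j \notin i |: B -> c j = 0) -> \sum_j c j *: v j = 0 ->
  (forall j, j \notin i |: B -> c' j = 0) -> \sum_j c' j *: v j = 0 ->
  c i != 0 -> forall j, c' j = c' i / c i * c j.
Proof.
move=> c_supp c_rel c'_supp c'_rel ci_neq0 j; apply/eqP; rewrite -subr_eq0; apply/eqP.
pose mu := c' i / c i; apply: (rel_on_setU1_eq0 (c := fun j => c' j - mu * c j)) => //.
- by move=> k kN; rewrite c_supp // c'_supp // mulr0 subr0.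
- rewrite (eq_bigr (fun j => c' j *: v j - mu *: (c j *: v j))); last first.
    by move=> k _; rewrite scalerBl scalerA.
  by rewrite sumrB -scaler_sumr c_rel c'_rel scaler0 subr0.
- by rewrite /mu divfK // subrr.
Qed.

Lemma elem_int_rel_of_not_free_on_setU1 : ~ free_on v (i |: B) ->
  exists a : 'I_m -> int,
    [/\ elem_int_rel v a, a i != 0 & forall j, a j != 0 -> j \in i |: B].
Proof.
move=> /rel_of_not_free_on [c [c_supp c_rel [k ck_neq0]]].
have ci_neq0 : c i != 0.
  by apply: contra_neq ck_neq0 => /(rel_on_setU1_eq0 c_supp c_rel)->.
have [a [l l_neq0 [aE a_gcd]]] := primitive_int_multiple ci_neq0.
have a_neq0 j : (a j != 0) = (c j != 0).
  by rewrite -(intr_eq0 rat) aE mulf_eq0 negb_or l_neq0.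
have a_supp j : a j != 0 -> j \in i |: B.
  by rewrite a_neq0; apply: contraR => /c_supp ->.
exists a; split=> //; last by rewrite a_neq0.
split=> //.
  split; first by exists i; rewrite intr_eq0 a_neq0.
  rewrite (eq_bigr (fun j => l *: (c j *: v j))); last by move=> j _; rewrite aE scalerA.
  by rewrite -scaler_sumr c_rel scaler0.
move=> c' [[k' ck'_neq0] c'_rel] /subsetP c'_supp.
have c'_on j : j \notin i |: B -> c' j = 0.
  move=> jN; apply/eqP; apply: contraR jN => cj_neq0.
  by apply: a_supp; move: (c'_supp j); rewrite !inE; apply.
have c'i_neq0 : c' i != 0.
  by apply: contra_neq ck'_neq0 => /(rel_on_setU1_eq0 c'_on c'_rel)->.
have c'E := rel_on_setU1_proportional c_supp c_rel c'_on c'_rel ci_neq0.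
apply/setP => j; rewrite !inE a_neq0 c'E mulf_eq0 negb_or.
by rewrite mulf_eq0 invr_eq0 negb_or c'i_neq0 ci_neq0.
Qed.

End Circuits.

Section BasisCoordinates.
Variables (m n : nat) (v : 'I_m -> 'rV[rat]_n) (B : {set 'I_m}).
Hypotheses (freeB : free_on v B) (maxB : forall i, i \notin B -> ~ free_on v (i |: B)).

Lemma inQP_coords_notin i : i \notin B ->
  exists c : 'I_m -> rat,
    [/\ v i = \sum_j c j *: v j, forall j, inQP v (c j) & forall j, j \notin B -> c j = 0].
Proof.
move=> iNB; have [a [a_elem ai_neq0 a_supp]] :=
  elem_int_rel_of_not_free_on_setU1 freeB (maxB iNB).
have [[_ a_rel] _ _] := a_elem.
have aiR : (a i)%:~R != 0 :> rat by rewrite intr_eq0.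
exists (fun j => if j == i then 0 else - (a j)%:~R / (a i)%:~R); split.
- rewrite (bigD1 i) //= eqxx scale0r add0r.
  move: a_rel; rewrite (bigD1 i) //= => /eqP; rewrite addr_eq0 => /eqP ai_vi.
  apply: (scalerI aiR); rewrite ai_vi scaler_sumr -sumrN; apply: eq_bigr => j /negbTE->.
  by rewrite scalerA mulrCA divff // mulr1 scaleNr.
- move=> j; case: (j == i); first exact: inQP0.
  by rewrite -rmorphN; apply: inQP_div_elem_int_rel.
- move=> j jNB; case: eqP => // /eqP ji.
  have /eqP -> : a j == 0.
    by apply: contraR jNB => /a_supp; rewrite !inE (negbTE ji).
  by rewrite oppr0 mul0r.
Qed.

Lemma inQP_coords i : exists c : 'I_m -> rat,
  [/\ v i = \sum_j c j *: v j, forall j, inQP v (c j),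
      forall j, j \notin B -> c j = 0 & i \in B -> forall j, c j = (j == i)%:R].
Proof.
case: (boolP (i \in B)) => [iB|iNB].
  exists (fun j => (j == i)%:R); split=> //.
  - rewrite (bigD1 i) //= eqxx scale1r big1 ?addr0 // => j /negbTE->.
    by rewrite scale0r.
  - by move=> j; case: (j == i); [exact: (inQP_int v 1) | exact: inQP0].
  - by move=> j jNB; case: eqP => // ji; rewrite ji iB in jNB.
have [c [vE c_QP c_supp]] := inQP_coords_notin iNB.
by exists c; split=> //; rewrite iNB.
Qed.

Variable C : 'I_m -> 'I_m -> rat.
Hypotheses (C_expand : forall i, v i = \sum_j C i j *: v j)
  (C_supp : forall i j, j \notin B -> C i j = 0)
  (C_basis : forall i, i \in B -> forall j, C i j = (j == i)%:R).

Lemma sum_coords (u : 'I_m -> rat) :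
  \sum_i u i *: v i = \sum_j (\sum_i u i * C i j) *: v j.
Proof.
under eq_bigr => i _ do rewrite {1}C_expand scaler_sumr.
rewrite exchange_big; apply: eq_bigr => j _; rewrite scaler_suml.
by under eq_bigr do rewrite scalerA.
Qed.

Lemma coords_eq (u u' : 'I_m -> rat) :
  \sum_i u i *: v i = \sum_i u' i *: v i ->
  forall j, \sum_i u i * C i j = \sum_i u' i * C i j.
Proof.
move=> uu' j; apply/eqP; rewrite -subr_eq0 -sumrB; apply/eqP; move: j.
apply: freeB => [j jNB|]; first by apply: big1 => i _; rewrite C_supp // !mulr0 subrr.
under eq_bigr do rewrite sumrB scalerBl.
by rewrite sumrB -!sum_coords uu' subrr.
Qed.

Lemma coord_basis (u : 'I_m -> rat) j : j \in B ->
  \sum_i u i * C i j = u j + \sum_(i | i \notin B) u i * C i j.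
Proof.
move=> jB; rewrite (bigID (fun i => i \in B)) /=; congr (_ + _).
rewrite (bigD1 j) //= C_basis // eqxx mulr1 big1 ?addr0 // => i /andP[iB ij].
by rewrite C_basis // eq_sym (negbTE ij) mulr0.
Qed.

Lemma inQP_coeffs_basis (x z : 'I_m -> rat) :
  (forall i j, inQP v (C i j)) -> (forall i, inQP v (z i)) ->
  (forall i, i \notin B -> inQP v (x i)) ->
  \sum_i x i *: v i = \sum_i z i *: v i -> forall j, inQP v (x j).
Proof.
move=> C_QP z_QP x_QP xz j; case: (boolP (j \in B)) => [jB|]; last exact: x_QP.
have := coords_eq xz j; rewrite coord_basis // => /eqP.
rewrite eq_sym -subr_eq => /eqP <-.
apply: inQPD; first by apply: inQP_sum => i _; apply: inQPM.
by apply/inQPN/inQP_sum => i iNB; apply: inQPM; [apply: x_QP|].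
Qed.

End BasisCoordinates.

Lemma extend_free_on m n (v : 'I_m -> 'rV[rat]_n) (F : {set 'I_m}) : free_on v F ->
  exists2 B : {set 'I_m}, F \subset B &
    free_on v B /\ forall i, i \notin B -> ~ free_on v (i |: B).
Proof.
move=> freeF; have [B /maxsetP[/asboolP freeB maxB] FB] :=
  @maxset_exists _ (fun S => `[< free_on v S >]) F (asboolT freeF).
exists B => //; split=> // i iNB /asboolP freeiB.
by move: iNB; rewrite -(maxB _ freeiB (subsetUr _ _)) setU11.
Qed.

Lemma inQP_coeffs_free_on m n (v : 'I_m -> 'rV[rat]_n) (F : {set 'I_m})
    (x z : 'I_m -> rat) :
  free_on v F -> (forall i, inQP v (z i)) -> (forall i, i \notin F -> inQP v (x i)) ->
  \sum_i x i *: v i = \sum_i z i *: v i -> forall j, inQP v (x j).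
Proof.
move=> /extend_free_on[B FB [freeB maxB]] z_QP x_QP xz.
have /fin_all_exists[C C_spec] := inQP_coords freeB maxB.
apply: (inQP_coeffs_basis freeB (C := C)) z_QP _ xz.
- by move=> i; case: (C_spec i).
- by move=> i j; case: (C_spec i) => _ _ + _; apply.
- by move=> i; case: (C_spec i) => _ _ _.
- by move=> i j; case: (C_spec i).
- by move=> i iNB; apply: x_QP; apply: contra iNB; apply/subsetP.
Qed.

Definition step_to_bound (R : realFieldType) (lo hi x c : R) : R :=
  ((if 0 < c then hi else lo) - x) / c.

Lemma step_to_boundP (R : realFieldType) (lo hi x c : R) : lo < x < hi -> c != 0 ->
  [/\ 0 < step_to_bound lo hi x c, ~~ (lo < x + step_to_bound lo hi x c * c < hi)
    & forall t, 0 <= t <= step_to_bound lo hi x c -> lo <= x + t * c <= hi].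
Proof.
move=> /andP[lo_x x_hi] c_neq0; rewrite /step_to_bound.
case: (ltP 0 c) => [c_gt0|c_le0]; rewrite divfK // subrKC ?ltxx ?andbF //.
  split=> // [|t /andP[t_ge0]]; first by rewrite divr_gt0 // subr_gt0.
  by rewrite ler_pdivlMr // => ?; apply/andP; split; nra.
have c_lt0 : c < 0 by rewrite lt_neqAle c_neq0.
split=> // [|t /andP[t_ge0]]; first by rewrite ltr_ndivlMr // mul0r subr_lt0.
by rewrite ler_ndivlMr // => ?; apply/andP; split; nra.
Qed.

Definition slack m (a b x : 'I_m -> rat) : {set 'I_m} := [set i | a i < x i < b i].

Section Vertex.
Variables (m n : nat) (v : 'I_m -> 'rV[rat]_n) (a b : 'I_m -> rat).

Lemma slack_proper_step (x : 'I_m -> rat) :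
  (forall i, a i <= x i <= b i) -> ~ free_on v (slack a b x) ->
  exists x1 : 'I_m -> rat, [/\ forall i, a i <= x1 i <= b i,
    \sum_i x1 i *: v i = \sum_i x i *: v i & slack a b x1 \proper slack a b x].
Proof.
move=> x_box /rel_of_not_free_on[c [c_supp c_rel [k0 ck0_neq0]]].
have c_slack i : c i != 0 -> a i < x i < b i.
  by apply: contraR => iN; rewrite c_supp // inE.
pose r i := step_to_bound (a i) (b i) (x i) (c i).
case: (@arg_minP _ _ _ k0 (fun i => c i != 0) r ck0_neq0) => k ck_neq0 r_min.
have [rk_gt0 xk_hit _] := step_to_boundP (c_slack k ck_neq0) ck_neq0.
exists (fun i => x i + r k * c i); split.
- move=> i; case: (eqVneq (c i) 0) => [->|ci_neq0]; first by rewrite mulr0 addr0.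
  have [_ _ ->] // := step_to_boundP (c_slack i ci_neq0) ci_neq0.
  by rewrite ltW //= r_min.
- under eq_bigr do rewrite scalerDl -scalerA.
  by rewrite big_split /= -scaler_sumr c_rel scaler0 addr0.
- apply/properP; split; last by exists k; rewrite !inE ?c_slack.
  apply/subsetP => i; rewrite !inE; case: (eqVneq (c i) 0) => [->|/c_slack //].
  by rewrite mulr0 addr0.
Qed.

Lemma exists_free_slack (x : 'I_m -> rat) : (forall i, a i <= x i <= b i) ->
  exists y : 'I_m -> rat, [/\ forall i, a i <= y i <= b i,
    \sum_i y i *: v i = \sum_i x i *: v i & free_on v (slack a b y)].
Proof.
have [k] := ubnP #|slack a b x|; elim: k x => // k IHk x slack_lt x_box.
have [free_x|/(slack_proper_step x_box)[x1 [x1_box x1_sum /proper_card x1_lt]]] :=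
  pselect (free_on v (slack a b x)); first by exists x.
have [|y [y_box y_sum y_free]] := IHk x1 _ x1_box; first exact: leq_trans x1_lt _.
by exists y; rewrite y_sum x1_sum.
Qed.

Lemma bound_notin_slack (x : 'I_m -> rat) i : a i <= x i <= b i ->
  i \notin slack a b x -> x i = a i \/ x i = b i.
Proof.
rewrite inE !lt_neqAle => /andP[-> ->]; rewrite !andbT negb_and !negbK.
by case/orP => /eqP ->; [left | right].
Qed.

End Vertex.

Theorem mainTheorem6 (m n : nat) (v : 'I_m -> 'rV[rat]_n) (a b : 'I_m -> rat)
  (w : 'rV[rat]_n) :
  (forall i, inQP v (a i)) -> (forall i, inQP v (b i)) ->
  (forall i, a i <= b i) ->
  (exists z : 'I_m -> rat, (forall i, inQP v (z i)) /\ w = \sum_(i < m) z i *: v i) ->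
  (exists x : 'I_m -> rat, (forall i, a i <= x i <= b i) /\ w = \sum_(i < m) x i *: v i) ->
  exists y : 'I_m -> rat,
    [/\ forall i, inQP v (y i), forall i, a i <= y i <= b i & w = \sum_(i < m) y i *: v i].
Proof.
move=> a_QP b_QP _ [z [z_QP wz]] [x [x_box wx]].
have [y [y_box y_sum y_free]] := exists_free_slack v x_box.
exists y; split=> //; last by rewrite y_sum.
apply: (inQP_coeffs_free_on y_free z_QP); last by rewrite y_sum -wx wz.
by move=> i /(bound_notin_slack (y_box i))[]->.
Qed.
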